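(* Let $R$ be a commutative Noetherian ring with non-zero identity. Let $\mathcal{P} \subset R$ be a finite subset and $I = (\mathcal{P})$. Let $\mathcal{P}_0, \mathcal{P}_1, \ldots, \mathcal{P}_r$ be subsets of $\mathcal{P}$ satisfying: (B1) $\mathcal{P} = \mathcal{P}_0 \cup \mathcal{P}_1 \cup \cdots \cup \mathcal{P}_r$; (B2) $\mathcal{P}_0$ has exactly one element; (B3) for each $\ell$ with $0 < \ell \le r$ and every $a, a'' \in \mathcal{P}_\ell$ with $a \ne a''$, there exists an integer $m \ge 1$ such that $(a a'')^m \in (\mathcal{P}_0 \cup \cdots \cup \mathcal{P}_{\ell-1}) I^{2m-1}$, where $(\mathcal{P}_0 \cup \cdots \cup \mathcal{P}_{\ell-1})$ denotes the ideal generated by this set. Set $g_\ell = \sum_{a \in \mathcal{P}_\ell} a$ for $\ell = 0, 1, \ldots, r$. Then $J = (g_0, g_1, \ldots, g_r)$ is a reduction of $I$.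
   Context: An ideal $J \subseteq I$ is called a reduction of $I$ if there exists an integer $s \ge 1$ such that $I^{s+1} = J I^s$. *)

From HB Require Import structures.
From mathcomp Require Import all_boot all_order all_algebra.
From mathcomp Require Import finmap.
Set Implicit Arguments. Unset Strict Implicit. Unset Printing Implicit Defensive.
Import Order.TTheory GRing.Theory.
Local Open Scope ring_scope.

Definition ideal_gen (R : comNzRingType) (S : R -> Prop) : R -> Prop :=
  fun x => exists (n : nat) (c s : 'I_n -> R),
    (forall i, S (s i)) /\ x = \sum_(i < n) c i * s i.

Definition is_ideal (R : comNzRingType) (I : R -> Prop) : Prop :=
  [/\ I 0, (forall x y, I x -> I y -> I (x + y)) & (forall r x, I x -> I (r * x))].

Definition subideal (R : comNzRingType) (I J : R -> Prop) : Prop :=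
  forall x, I x -> J x.

Definition ideal_mul (R : comNzRingType) (I J : R -> Prop) : R -> Prop :=
  ideal_gen (fun x => exists a b, [/\ I a, J b & x = a * b]).

Fixpoint ideal_exp (R : comNzRingType) (I : R -> Prop) (n : nat) : R -> Prop :=
  match n with
  | 0 => fun _ => True
  | n'.+1 => ideal_mul I (ideal_exp I n')
  end.

Definition is_reduction (R : comNzRingType) (J I : R -> Prop) : Prop :=
  subideal J I /\
  exists s : nat, (1 <= s)%N /\
    forall x, ideal_exp I s.+1 x <-> ideal_mul J (ideal_exp I s) x.

Definition noetherian (R : comNzRingType) : Prop :=
  forall I : nat -> R -> Prop,
    (forall n, is_ideal (I n)) ->
    (forall n, subideal (I n) (I n.+1)) ->
    exists N : nat, forall n, (N <= n)%N -> forall x, I n x <-> I N x.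

(* Call x in P absorbed when x^(k+1) I^n is contained in J I^(k+n) for all large n.
   If every element of P is absorbed then, by pigeonhole, every monomial of large
   degree s+1 in P contains some x^(k+1), whence I^(s+1) = J I^s.
   The element of P_0 is g_0 itself, and absorption climbs the levels. For a in P_l
   let y = a (g_l - a), the sum of the a b with b <> a in P_l. By (B3) and pigeonhole
   some y^n lies in L I^(2n-1), L generated by the lower levels, and then a power of
   y^n lies in J I^(...): pigeonhole again finds in each of its monomials a high power
   of a lower element, absorbed by induction. Since (g_l - a)^M = (-a)^M mod g_l,
   a^(2M) = +-y^M mod g_l I^(2M-1), so a is absorbed. *)

From HB Require Import structures.
From mathcomp Require Import all_boot all_order all_algebra.
From mathcomp Require Import finmap.
From mathcomp Require Import zify ring.
Set Implicit Arguments. Unset Strict Implicit. Unset Printing Implicit Defensive.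
Import Order.TTheory GRing.Theory.
Local Open Scope ring_scope.

Section IdealGen.
Variable R : comNzRingType.
Implicit Types S T U : R -> Prop.

Lemma ideal_gen_seq S (l : seq (R * R)) :
  (forall p, p \in l -> S p.2) -> ideal_gen S (\sum_(p <- l) p.1 * p.2).
Proof.
move=> lS; exists (size l), (fun i => (nth (0, 0) l i).1), (fun i => (nth (0, 0) l i).2).
split; first by move=> i; apply/lS/mem_nth.
by rewrite (big_nth (0, 0)) big_mkord.
Qed.

Lemma ideal_gen_seqP S x : ideal_gen S x ->
  exists2 l : seq (R * R), (forall p, p \in l -> S p.2) & x = \sum_(p <- l) p.1 * p.2.
Proof.
case=> n [c [s [sS ->]]]; exists [seq (c i, s i) | i <- enum 'I_n].
  by move=> p /mapP [i _ ->]; apply: sS.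
by rewrite big_map big_enum.
Qed.

Lemma ideal_gen_ideal S : is_ideal (ideal_gen S).
Proof.
split.
- have -> : 0 = \sum_(p <- [::] : seq (R * R)) p.1 * p.2 by rewrite big_nil.
  exact: ideal_gen_seq.
- move=> _ _ /ideal_gen_seqP [l1 l1S ->] /ideal_gen_seqP [l2 l2S ->].
  by rewrite -big_cat; apply: ideal_gen_seq => p; rewrite mem_cat => /orP [/l1S | /l2S].
- move=> c _ /ideal_gen_seqP [l lS ->].
  have -> : c * \sum_(p <- l) p.1 * p.2 =
      \sum_(p <- [seq (c * q.1, q.2) | q <- l]) p.1 * p.2.
    by rewrite big_map mulr_sumr; apply: eq_bigr => p _; rewrite mulrA.
  by apply: ideal_gen_seq => _ /mapP [p /lS pS ->].
Qed.

Lemma mem_ideal_gen S x : S x -> ideal_gen S x.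
Proof.
move=> Sx; have -> : x = \sum_(p <- [:: (1, x)]) p.1 * p.2 by rewrite big_seq1 mul1r.
by apply: ideal_gen_seq => p; rewrite inE => /eqP ->.
Qed.

Lemma ideal_gen_min S T : is_ideal T -> (forall x, S x -> T x) ->
  forall x, ideal_gen S x -> T x.
Proof.
case=> T0 TD TM ST _ [n [c [s [sS ->]]]].
by apply: (big_ind T) => // i _; apply/TM/ST.
Qed.

Section IdealLaws.
Variables (T : R -> Prop) (idT : is_ideal T).

Lemma ideal0 : T 0. Proof. by case: idT. Qed.
Lemma idealD x y : T x -> T y -> T (x + y). Proof. by case: idT => _ + _; apply. Qed.
Lemma idealM c x : T x -> T (c * x). Proof. by case: idT => _ _; apply. Qed.
Lemma idealN x : T x -> T (- x). Proof. by rewrite -mulN1r; apply: idealM. Qed.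
Lemma idealB x y : T x -> T y -> T (x - y). Proof. by move=> Tx /idealN; apply: idealD. Qed.

Lemma is_ideal_mulr y : is_ideal (fun x => T (x * y)).
Proof.
split=> [|a b Ta Tb|c a Ta].
- by rewrite mul0r; apply: ideal0.
- by rewrite mulrDl; apply: idealD.
- by rewrite -mulrA; apply: idealM.
Qed.

End IdealLaws.

Lemma ideal_gen_mul S T U x y : (forall a b, S a -> T b -> U (a * b)) ->
  ideal_gen S x -> ideal_gen T y -> ideal_gen U (x * y).
Proof.
move=> STU Sx Ty; have idU := ideal_gen_ideal U.
move: x Sx; apply: ideal_gen_min.
  split=> [|a b Ua Ub|c a Ua].
  - by rewrite mul0r; apply: ideal0.
  - by rewrite mulrDl; apply: (idealD idU).
  - by rewrite -mulrA; apply: (idealM idU).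
move=> a Sa; move: y Ty; apply: ideal_gen_min.
  split=> [|b c Ub Uc|c b Ub].
  - by rewrite mulr0; apply: ideal0.
  - by rewrite mulrDr; apply: (idealD idU).
  - by rewrite mulrCA; apply: (idealM idU).
by move=> b Tb; apply/mem_ideal_gen/STU.
Qed.

Lemma ideal_gen_sum S (I : eqType) (s : seq I) (F : I -> R) (Q : pred I) :
  (forall i, i \in s -> Q i -> ideal_gen S (F i)) ->
  ideal_gen S (\sum_(i <- s | Q i) F i).
Proof.
move=> FS; rewrite big_seq_cond; apply: (big_ind (ideal_gen S)).
- exact: ideal0 (ideal_gen_ideal S).
- exact: idealD (ideal_gen_ideal S).
by move=> i /andP []; apply: FS.
Qed.

End IdealGen.

Lemma count_pigeonhole (T : eqType) (U s : seq T) k :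
  {subset s <= U} -> (size U * k < size s)%N -> exists2 x, x \in s & (k < count_mem x s)%N.
Proof.
elim: U s => [|u U IH] s sU lt_s.
  by case: s sU lt_s => [|y s] // /(_ y (mem_head _ _)).
have [lt_k_u | le_u_k] := ltnP k (count_mem u s).
  by exists u => //; rewrite -has_pred1 has_count (leq_ltn_trans _ lt_k_u).
have s'U : {subset [seq y <- s | y != u] <= U}.
  by move=> y; rewrite mem_filter => /andP [yu /sU]; rewrite inE (negPf yu).
have lt_s' : (size U * k < size [seq y <- s | y != u])%N.
  move: lt_s; rewrite /= mulSn size_filter -(count_predC (pred1 u) s) => lt_s.
  by rewrite -(ltn_add2l k) (leq_trans lt_s) // leq_add2r.
have [x] := IH _ s'U lt_s'; rewrite mem_filter => /andP [_ xs] lt_k_x.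
by exists x => //; rewrite (leq_trans lt_k_x) // count_filter sub_count // => y /andP [].
Qed.

Lemma uniform_bound (T : eqType) (s : seq T) (Q : T -> nat -> Prop) :
  (forall x m n, x \in s -> (m <= n)%N -> Q x m -> Q x n) ->
  (forall x, x \in s -> exists n, Q x n) -> exists n, forall x, x \in s -> Q x n.
Proof.
elim: s => [|y s IH] Qmono sQ; first by exists 0%N.
have sys x : x \in s -> x \in y :: s by move=> xs; rewrite inE xs orbT.
have [m Qym] := sQ y (mem_head _ _).
have [n Qsn] : exists n, forall x, x \in s -> Q x n.
  by apply: IH => [x m' n' /sys | x /sys /sQ]; first exact: Qmono.
exists (maxn m n) => x /predU1P [-> | xs].
  exact: Qmono (mem_head _ _) (leq_maxl m n) Qym.
exact: Qmono (sys x xs) (leq_maxr m n) (Qsn x xs).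
Qed.

Section Monomials.
Variable R : comNzRingType.
Implicit Types A B : R -> Prop.

Definition monomial B n (z : R) := exists t : seq R,
  [/\ size t = n, {in t, forall y, B y} & z = \prod_(y <- t) y].

Definition bimonomial A B c e (z : R) :=
  exists x y, [/\ monomial A c x, monomial B e y & z = x * y].

Lemma monomial1 B : monomial B 0 1.
Proof. by exists [::]; rewrite big_nil. Qed.

Lemma monomial_mem B x : B x -> monomial B 1 x.
Proof. by exists [:: x]; rewrite big_seq1; split=> // y; rewrite inE => /eqP ->. Qed.

Lemma monomial1_mem B x : monomial B 1 x -> B x.
Proof. by case=> [[|y [|? ?]] [//= _ yB ->]]; rewrite big_seq1; apply/yB/mem_head. Qed.

Lemma monomial_mul B m n x y : monomial B m x -> monomial B n y -> monomial B (m + n) (x * y).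
Proof.
case=> [s [<- sB ->]] [t [<- tB ->]]; exists (s ++ t).
by rewrite size_cat big_cat; split=> // z; rewrite mem_cat => /orP [/sB | /tB].
Qed.

Lemma monomial_sub A B n z : (forall x, A x -> B x) -> monomial A n z -> monomial B n z.
Proof. by move=> AB [t [tn tA ->]]; exists t; split=> // y /tA /AB. Qed.

Lemma monomial_comp B d n z : monomial (monomial B d) n z -> monomial B (n * d) z.
Proof.
case=> t [<- tB ->]; elim: t tB => [|y t IH] tB; first by rewrite big_nil; apply: monomial1.
rewrite big_cons /= mulSn; apply: monomial_mul; first exact/tB/mem_head.
by apply: IH => x xt; apply/tB; rewrite inE xt orbT.
Qed.

Lemma monomial_pigeonhole B (U : seq R) n k z : (forall y, B y -> y \in U) ->
  (size U * k < n)%N -> monomial B n z ->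
  exists x n' w, [/\ B x, n = (k.+1 + n')%N, monomial B n' w & z = x ^+ k.+1 * w].
Proof.
move=> BU lt_n [t [tn tB ->]].
have [x xt lt_k_x] : exists2 x, x \in t & (k < count_mem x t)%N.
  by apply: (count_pigeonhole (U := U)); [move=> y /tB /BU | rewrite tn].
set t' := nseq (count_mem x t - k.+1) x ++ [seq y <- t | predC1 x y].
have t_perm : perm_eq t (nseq k.+1 x ++ t').
  have /all_pred1P : all (pred1 x) [seq y <- t | pred1 x y] by apply: filter_all.
  rewrite size_filter catA -nseqD subnKC // => <-.
  by rewrite perm_sym perm_filterC.
have t't : {subset t' <= t} by move=> y y_t'; rewrite (perm_mem t_perm) mem_cat y_t' orbT.
exists x, (size t'), (\prod_(y <- t') y); split.
- exact: tB.
- by rewrite -tn (perm_size t_perm) size_cat size_nseq.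
- by exists t'; split=> // y /t't /tB.
- have prod_nseq m : \prod_(y <- nseq m x) y = x ^+ m.
    by elim: m => [|m IH]; rewrite ?big_nil // big_cons IH exprS.
  by rewrite (perm_big _ t_perm) big_cat prod_nseq.
Qed.

Lemma bimonomial_mul A B c e c' e' x y : bimonomial A B c e x -> bimonomial A B c' e' y ->
  bimonomial A B (c + c') (e + e') (x * y).
Proof.
case=> [x1 [x2 [Ax1 Bx2 ->]]] [y1 [y2 [Ay1 By2 ->]]]; exists (x1 * y1), (x2 * y2).
by split; [apply: monomial_mul | apply: monomial_mul | ring].
Qed.

Lemma bimonomialMr A B c e e' x y : bimonomial A B c e x -> monomial B e' y ->
  bimonomial A B c (e + e') (x * y).
Proof.
case=> [x1 [x2 [Ax1 Bx2 ->]]] By; exists x1, (x2 * y).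
by split=> //; [apply: monomial_mul | ring].
Qed.

Lemma ideal_monomial_mul B m n x y : ideal_gen (monomial B m) x ->
  ideal_gen (monomial B n) y -> ideal_gen (monomial B (m + n)) (x * y).
Proof. exact/ideal_gen_mul/monomial_mul. Qed.

Lemma ideal_bimonomial_mul A B c e c' e' x y : ideal_gen (bimonomial A B c e) x ->
  ideal_gen (bimonomial A B c' e') y -> ideal_gen (bimonomial A B (c + c') (e + e')) (x * y).
Proof. exact/ideal_gen_mul/bimonomial_mul. Qed.

Lemma ideal_bimonomialMr A B c e e' x y : ideal_gen (bimonomial A B c e) x ->
  ideal_gen (monomial B e') y -> ideal_gen (bimonomial A B c (e + e')) (x * y).
Proof. exact/ideal_gen_mul/bimonomialMr. Qed.

Lemma ideal_monomial_mem B x : B x -> ideal_gen (monomial B 1) x.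
Proof. by move/monomial_mem/mem_ideal_gen. Qed.

Lemma ideal_bimonomial_mem A B x : A x -> ideal_gen (bimonomial A B 1 0) x.
Proof.
move=> Ax; apply: mem_ideal_gen; exists x, 1.
by split; [apply: monomial_mem | apply: monomial1 | rewrite mulr1].
Qed.

Lemma ideal_monomial_exp B n x : ideal_gen (monomial B 1) x ->
  ideal_gen (monomial B n) (x ^+ n).
Proof.
move=> Bx; elim: n => [|n IH]; first exact/mem_ideal_gen/monomial1.
by rewrite exprS; apply: (ideal_monomial_mul (m := 1)).
Qed.

Lemma ideal_bimonomial_exp A B c e n x : ideal_gen (bimonomial A B c e) x ->
  ideal_gen (bimonomial A B (n * c) (n * e)) (x ^+ n).
Proof.
move=> ABx; elim: n => [|n IH].
  apply: mem_ideal_gen; exists 1, 1.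
  by split; [apply: monomial1 | apply: monomial1 | rewrite mulr1].
by rewrite exprS !mulSn; apply: ideal_bimonomial_mul.
Qed.

Lemma ideal_exp_monomialE B n x :
  ideal_exp (ideal_gen B) n x <-> ideal_gen (monomial B n) x.
Proof.
elim: n x => [|n IH] x /=.
  split=> // _; rewrite -[x]mulr1.
  exact/(idealM (ideal_gen_ideal _))/mem_ideal_gen/monomial1.
split; apply: ideal_gen_min; try exact: ideal_gen_ideal.
  move=> _ [a [b [Ba /IH Bb ->]]]; apply: (ideal_monomial_mul (m := 1)) => //.
  by move: Ba; apply: ideal_gen_min; [apply: ideal_gen_ideal | apply: ideal_monomial_mem].
move=> _ [[|y t] [//= [tn] yB ->]]; rewrite big_cons; apply: mem_ideal_gen.
exists y, (\prod_(z <- t) z); split=> //; first exact/mem_ideal_gen/yB/mem_head.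
by apply/IH/mem_ideal_gen; exists t; split=> // z zt; apply/yB; rewrite inE zt orbT.
Qed.

Lemma ideal_mul_bimonomialE A B n x :
  ideal_mul (ideal_gen A) (ideal_exp (ideal_gen B) n) x <->
  ideal_gen (bimonomial A B 1 n) x.
Proof.
split; apply: ideal_gen_min; try exact: ideal_gen_ideal.
  move=> _ [a [b [Aa /ideal_exp_monomialE Bb ->]]]; apply: (ideal_bimonomialMr (e := 0)) => //.
  by move: Aa; apply: ideal_gen_min; [apply: ideal_gen_ideal | apply: ideal_bimonomial_mem].
move=> _ [a [b [/monomial1_mem Aa Bb ->]]]; apply: mem_ideal_gen.
by exists a, b; split; [apply: mem_ideal_gen | apply/ideal_exp_monomialE/mem_ideal_gen |].
Qed.

Lemma expr_subr_ideal B (g a : R) n : ideal_gen (monomial B 1) g ->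
  ideal_gen (monomial B 1) a ->
  exists2 h, ideal_gen (monomial B n) h & (g - a) ^+ n.+1 = (- a) ^+ n.+1 + g * h.
Proof.
move=> Bg Ba; exists (\sum_(i < n.+1) (g - a) ^+ (n - i) * (- a) ^+ i).
  have Bga : ideal_gen (monomial B 1) (g - a) by apply: (idealB (ideal_gen_ideal _)).
  have Bna : ideal_gen (monomial B 1) (- a) by apply: (idealN (ideal_gen_ideal _)).
  apply: ideal_gen_sum => i _ _; rewrite -[X in monomial B X](subnK (ltnSE (ltn_ord i))).
  by apply: ideal_monomial_mul; apply: ideal_monomial_exp.
by rewrite -[LHS](subrK ((- a) ^+ n.+1)) subrXX opprK subrK addrC.
Qed.

End Monomials.

Lemma expr_double_cross (R : comNzRingType) (a g h : R) m :
  (g - a) ^+ m = (- a) ^+ m + g * h ->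
  a ^+ (m + m) = (-1) ^+ m * ((a * (g - a)) ^+ m - g * (a ^+ m * h)).
Proof.
move=> gh; rewrite exprMn gh [(- a) ^+ m]exprNn exprD.
have sign2 : (-1) ^+ m * (-1) ^+ m = 1 :> R by rewrite -expr2 sqrr_sign.
transitivity ((-1) ^+ m * (-1) ^+ m * (a ^+ m * a ^+ m)); first by rewrite sign2 mul1r.
move: ((-1) ^+ m) (a ^+ m) => e am; ring.
Qed.

Section Reduction.
Variables (R : comNzRingType) (P : {fset R}) (r : nat) (Ps : nat -> {fset R}).
Hypothesis Ps_sub : forall l, (l <= r)%N -> (Ps l `<=` P)%fset.
Hypothesis Ps_cover : forall x, x \in P -> exists2 l, (l <= r)%N & x \in Ps l.
Hypothesis card_Ps0 : #|` Ps 0%N| = 1%N.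
Hypothesis cross_Ps : forall l, (0 < l)%N -> (l <= r)%N ->
  forall a a2, a \in Ps l -> a2 \in Ps l -> a != a2 ->
  exists2 m : nat, (1 <= m)%N &
    ideal_mul (ideal_gen (fun x => exists2 k, (k < l)%N & x \in Ps k))
              (ideal_exp (ideal_gen (fun x => x \in P)) (2 * m - 1))
              ((a * a2) ^+ m).

(* [JI n] is J I^n and [LI l n] is L I^n, with L generated by the levels below l. *)
Local Notation inP := (fun x : R => x \in P).
Local Notation lower l := (fun x : R => exists2 k, (k < l)%N & x \in Ps k).
Local Notation gens := (fun x : R => exists2 l, (l <= r)%N & x = \sum_(a <- Ps l) a).
Local Notation JI n := (ideal_gen (bimonomial gens inP 1 n)).
Local Notation LI l n := (ideal_gen (bimonomial (lower l) inP 1 n)).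

Lemma Ps_in_P l x : (l <= r)%N -> x \in Ps l -> x \in P.
Proof. by move=> le_lr; apply/fsubsetP/Ps_sub. Qed.

Lemma lower_in_P l x : (l <= r.+1)%N -> lower l x -> x \in P.
Proof. by move=> le_l [k lt_kl]; apply: Ps_in_P; rewrite -ltnS (leq_trans lt_kl). Qed.

Lemma ideal_sum_Ps l : (l <= r)%N -> ideal_gen (monomial inP 1) (\sum_(a <- Ps l) a).
Proof.
by move=> le_lr; apply: ideal_gen_sum => a aPs _; apply/ideal_monomial_mem/(Ps_in_P le_lr).
Qed.

Lemma JI_sub_exp n z : JI n z -> ideal_gen (monomial inP n.+1) z.
Proof.
apply: ideal_gen_min; first exact: ideal_gen_ideal.
move=> _ [g [w [/monomial1_mem [l le_lr ->] Pw ->]]].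
by apply: (ideal_monomial_mul (m := 1)); [apply: ideal_sum_Ps | apply: mem_ideal_gen].
Qed.

Definition absorbed x k N := forall n w, (N <= n)%N -> monomial inP n w ->
  JI (k + n) (x ^+ k.+1 * w).

Lemma absorbedS x k N : x \in P -> absorbed x k N -> absorbed x k.+1 N.
Proof.
move=> xP xk n w le_Nn Pw; rewrite exprSr -mulrA addSnnS.
by apply: xk; [apply: leqW | apply: (monomial_mul (m := 1)) => //; apply: monomial_mem].
Qed.

Lemma absorbed_mono x k k' N N' : x \in P -> (k <= k')%N -> (N <= N')%N ->
  absorbed x k N -> absorbed x k' N'.
Proof.
move=> xP le_kk' le_NN' xk.
have xkN' : absorbed x k N' by move=> n w le_N'n; apply/xk/(leq_trans le_NN').
rewrite -(subnKC le_kk'); elim: (k' - k)%N => [|d IH]; first by rewrite addn0.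
by rewrite addnS; apply: absorbedS.
Qed.

Lemma absorbed_Ps0 x : x \in Ps 0 -> absorbed x 0 0.
Proof.
have /cardfs1P [x0 Ps0E] : #|` Ps 0| == 1%N by rewrite card_Ps0.
rewrite Ps0E in_fset1 => /eqP -> n w _ Pw; apply: mem_ideal_gen; exists x0, w.
by split=> //; apply: monomial_mem; exists 0%N; rewrite ?Ps0E ?big_seq_fset1.
Qed.

Lemma lower_pow_absorbed l k e z : (l <= r.+1)%N ->
  (forall x, lower l x -> absorbed x k k) -> LI l e z ->
  forall n w, (k <= n)%N -> monomial inP n w ->
  JI (#|` P| * k + (#|` P| * k).+1 * e + n) (z ^+ (#|` P| * k).+1 * w).
Proof.
move=> le_l lowk /(ideal_bimonomial_exp (#|` P| * k).+1); rewrite muln1.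
move: (z ^+ _) => zK zKI n w le_kn Pw; move: zK zKI.
apply: (ideal_gen_min (is_ideal_mulr (ideal_gen_ideal _) w)).
move=> _ [x [v [lx Pv ->]]].
have [b [n' [x' [lb En' lx' ->]]]] :=
  monomial_pigeonhole (U := P) (k := k) (fun y => lower_in_P le_l) (ltnSn _) lx.
have {}En' : (#|` P| * k = k + n')%N by apply: succn_inj; rewrite En'.
rewrite En' in Pv *.
have Px'vw : monomial inP (n' + (k + n').+1 * e + n) (x' * v * w).
  apply: monomial_mul => //; apply: monomial_mul => //.
  by apply: monomial_sub lx' => y /(lower_in_P le_l).
have := lowk b lb _ _ (leq_trans le_kn (leq_addl _ _)) Px'vw.
by rewrite !addnA !mulrA.
Qed.

Section CrossTerms.
Variables (l : nat) (a : R).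
Hypotheses (l_gt0 : (0 < l)%N) (le_lr : (l <= r)%N) (aPs : a \in Ps l).

Lemma cross_pow : exists m, forall b, b \in Ps l -> b != a ->
  LI l (2 * m + 1) ((a * b) ^+ m.+1).
Proof.
have aP := Ps_in_P le_lr aPs.
apply: (uniform_bound (Q := fun b m => b != a -> LI l (2 * m + 1) ((a * b) ^+ m.+1)))
  => [b m n bPs le_mn abm ba | b bPs].
  have abI : ideal_gen (monomial inP 2) (a * b).
    by apply: (ideal_monomial_mul (m := 1)); apply: ideal_monomial_mem; last exact: Ps_in_P bPs.
  elim: n le_mn => [|n IH]; first by rewrite leqn0 => /eqP m0; move: abm; rewrite m0 => /(_ ba).
  rewrite leq_eqVlt ltnS => /predU1P [mn | /IH {}IH]; first by move: abm; rewrite mn => /(_ ba).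
  rewrite exprSr (_ : 2 * n.+1 + 1 = 2 * n + 1 + 2)%N; last lia.
  exact: ideal_bimonomialMr IH abI.
have [-> | ab] := eqVneq a b; first by exists 0%N.
have [[|m] // _ /ideal_mul_bimonomialE abm] := cross_Ps l_gt0 le_lr aPs bPs ab.
by exists m => _; rewrite (_ : 2 * m + 1 = 2 * m.+1 - 1)%N //; lia.
Qed.

Lemma cross_sum_pow : exists n,
  LI l (2 * n + 1) ((\sum_(b <- Ps l | b != a) a * b) ^+ n.+1).
Proof.
have [m abm] := cross_pow; have aP := Ps_in_P le_lr aPs.
pose cross q := exists2 b, b \in Ps l & b != a /\ q = a * b.
have crossP q : cross q -> monomial inP 2 q.
  case=> b bPs [_ ->]; apply: (monomial_mul (m := 1)); apply: monomial_mem => //.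
  exact: Ps_in_P bPs.
have crossU q : cross q -> q \in [seq a * b | b <- Ps l] by case=> b bPs [_ ->]; apply: map_f.
exists (#|` Ps l| * m)%N.
have /(ideal_monomial_exp (#|` Ps l| * m).+1) :
    ideal_gen (monomial cross 1) (\sum_(b <- Ps l | b != a) a * b).
  by apply: ideal_gen_sum => b bPs ba; apply: ideal_monomial_mem; exists b.
apply: ideal_gen_min; first exact: ideal_gen_ideal.
have lt_cross : (size [seq (a * b)%R | b <- Ps l] * m < (#|` Ps l| * m).+1)%N.
  by rewrite size_map.
move=> z zc; have [q [n' [w [[b bPs [ba ->]] En' cw ->]]]] :=
  monomial_pigeonhole crossU lt_cross zc.
have -> : (2 * (#|` Ps l| * m) + 1 = 2 * m + 1 + n' * 2)%N by lia.
apply: ideal_bimonomialMr (abm b bPs ba) _.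
exact/mem_ideal_gen/monomial_comp/(monomial_sub crossP).
Qed.

Lemma absorbed_cross k : (forall x, lower l x -> absorbed x k k) -> exists K, absorbed a K K.
Proof.
move=> lowk; have aP := Ps_in_P le_lr aPs.
set g := \sum_(b <- Ps l) b.
have [n yn] := cross_sum_pow.
have y_eq : \sum_(b <- Ps l | b != a) a * b = a * (g - a).
  by rewrite /g (bigD1_seq a) ?fset_uniq //= addrC addrK mulr_sumr.
rewrite y_eq in yn.
set K := (#|` P| * k)%N.
have yK := lower_pow_absorbed (leqW le_lr) lowk yn.
set M := (n.+1 * K.+1).-1.
have EM : M.+1 = (n.+1 * K.+1)%N by rewrite prednK // muln_gt0.
have [h Ph gh] := expr_subr_ideal M (ideal_sum_Ps le_lr) (ideal_monomial_mem (B := inP) aP).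
exists (maxn (M.+1 + M) k); apply: (absorbed_mono aP (leq_maxl _ _) (leq_maxr _ _)).
move=> N w le_kN Pw; rewrite -addnS (expr_double_cross gh) -mulrA.
apply: (idealM (ideal_gen_ideal _)); rewrite mulrBl; apply: (idealB (ideal_gen_ideal _)).
  rewrite EM exprM; have := yK N w le_kN Pw.
  by rewrite (_ : K + K.+1 * (2 * n + 1) + N = M.+1 + M + N)%N //; nia.
have gI : ideal_gen (bimonomial gens inP 1 0) g by apply: ideal_bimonomial_mem; exists l.
have ahwI : ideal_gen (monomial inP (M.+1 + M + N)) (a ^+ M.+1 * (h * w)).
  rewrite -addnA; apply: ideal_monomial_mul; first exact/ideal_monomial_exp/ideal_monomial_mem.
  by apply: ideal_monomial_mul => //; apply: mem_ideal_gen.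
by rewrite -!mulrA; exact: ideal_bimonomialMr gI ahwI.
Qed.

End CrossTerms.

Lemma absorbed_levels l : (l <= r)%N -> exists k, forall x, lower l.+1 x -> absorbed x k k.
Proof.
elim: l => [|l IH] le_lr.
  by exists 0%N => x [j]; rewrite ltnS leqn0 => /eqP -> /absorbed_Ps0.
have [k1 low1] := IH (ltnW le_lr).
have [k2 top2] : exists k, forall x, x \in Ps l.+1 -> absorbed x k k.
  apply: (uniform_bound (Q := fun x k => absorbed x k k)) => [x m n xPs le_mn | x xPs].
    exact: (absorbed_mono (Ps_in_P le_lr xPs) le_mn le_mn).
  by have [K aK] := absorbed_cross (ltn0Sn l) le_lr xPs low1; exists K.
exists (maxn k1 k2) => x [j]; rewrite ltnS leq_eqVlt => /orP [/eqP -> xPs | lt_jl xPs].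
  exact: absorbed_mono (Ps_in_P le_lr xPs) (leq_maxr _ _) (leq_maxr _ _) (top2 x xPs).
have xP : x \in P by apply: (lower_in_P (l := l.+1)) => //; [apply: ltnW | exists j].
by apply: absorbed_mono xP (leq_maxl _ _) (leq_maxl _ _) (low1 x _); exists j.
Qed.

Lemma reduction_exponent : exists2 s, (1 <= s)%N &
  forall z, ideal_gen (monomial inP s.+1) z <-> JI s z.
Proof.
have [k Pk] : exists k, forall x, x \in P -> absorbed x k k.
  have [k lowk] := absorbed_levels (leqnn r).
  by exists k => x /Ps_cover [l le_lr xPs]; apply: lowk; exists l.
exists (#|` P| * k + k + k).+1 => // z; split; last exact: JI_sub_exp.
have lt_s : (#|` P| * k < (#|` P| * k + k + k).+2)%N by lia.
move: z; apply: ideal_gen_min; first exact: ideal_gen_ideal.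
move=> z zP; have [x [n' [w [xP En' Pw ->]]]] :=
  monomial_pigeonhole (U := P) (fun y yP => yP) lt_s zP.
have -> : ((#|` P| * k + k + k).+1 = k + n')%N by lia.
by apply: Pk => //; lia.
Qed.

End Reduction.

Theorem theorem2p1 (R : comNzRingType) (hR : noetherian R)
  (P : {fset R}) (r : nat) (Ps : nat -> {fset R}) :
  (forall l, (l <= r)%N -> (Ps l `<=` P)%fset) ->
  (* (B1) *)
  (forall x, x \in P -> exists2 l, (l <= r)%N & x \in Ps l) ->
  (* (B2) *)
  #|` Ps 0%N| = 1%N ->
  (* (B3) *)
  (forall l, (0 < l)%N -> (l <= r)%N ->
     forall a a2, a \in Ps l -> a2 \in Ps l -> a != a2 ->
     exists2 m : nat, (1 <= m)%N &
       ideal_mul (ideal_gen (fun x => exists2 k, (k < l)%N & x \in Ps k))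
                 (ideal_exp (ideal_gen (fun x => x \in P)) (2 * m - 1))
                 ((a * a2) ^+ m)) ->
  is_reduction
    (ideal_gen (fun x => exists2 l, (l <= r)%N & x = \sum_(a <- Ps l) a))
    (ideal_gen (fun x => x \in P)).
Proof.
move=> Ps_sub Ps_cover card_Ps0 cross_Ps; split.
  apply: ideal_gen_min; first exact: ideal_gen_ideal.
  move=> _ [l le_lr ->]; apply: ideal_gen_sum => a aPs _.
  exact/mem_ideal_gen/(Ps_in_P Ps_sub le_lr).
have [s s_gt0 sE] := reduction_exponent Ps_sub Ps_cover card_Ps0 cross_Ps.
exists s; split=> // z; split.
  by move/ideal_exp_monomialE/sE/ideal_mul_bimonomialE.
by move/ideal_mul_bimonomialE/sE/ideal_exp_monomialE.
Qed.
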